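(* Let $\theta\in(0,1)$ be irrational and $k\in\Lambda$. Then any two distinct component intervals $I_k(i),I_k(i')$ ($1\le i\ne i'\le q_k$) of $D_k$ are separated by a gap of length at least $\tfrac17\|q_{k-1}\theta\|$.
   Context: $\mathbb T=\mathbb R/\mathbb Z$, points identified with fractional parts; $(x-a,x+b)$ denotes the projection to $\mathbb T$ of the real interval. $\|t\|$ is the distance to the nearest integer. $\theta=[0;a_1,a_2,\dots]$ with convergent denominators $q_0=1$, $q_{k+1}=a_{k+1}q_k+q_{k-1}$. For $k\ge0$: $r_{k+1}=\lfloor\sqrt{4a_{k+1}+5}\rfloor-3$ if $a_{k+1}\ne2$ and $r_{k+1}=1$ if $a_{k+1}=2$; $\tilde r_{k+1}=2$ if $a_{k+1}=4$ and $a_{k+2}\ge2$, and $\tilde r_{k+1}=r_{k+1}$ otherwise. $\Lambda=\{k\in\mathbb N: a_{k+1}\ge3\text{ or }a_{k+2}=2\}$. For $k\in\Lambda$ put $R_k=\tilde r_{k+1}\|q_k\theta\|+\|q_{k+1}\theta\|$, and $L_k=\|q_k\theta\|$ if $a_{k+2}\ne2$, $L_k=\|q_{k+1}\theta\|+\|q_{k+2}\theta\|$ if $a_{k+2}=2$; set $I_k(i)=(i\theta-L_k,\,i\theta+R_k)$ if $k$ is even and $I_k(i)=(i\theta-R_k,\,i\theta+L_k)$ if $k$ is odd, and $D_k=\bigcup_{i=1}^{q_k}I_k(i)$. *)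

From Stdlib Require Import Reals Lra Lia ZArith Arith.
Open Scope R_scope.

Definition dnint (t : R) : R := Rmin (frac_part t) (1 - frac_part t).

Fixpoint cf_rem (theta : R) (m : nat) : R :=
  match m with
  | O => theta
  | S m' => frac_part (/ cf_rem theta m')
  end.

(* partial quotients a_n (n >= 1): a_n = floor(1/x_{n-1}); theta = [0;a_1,a_2,...] *)
Definition cf_a (theta : R) (n : nat) : nat :=
  Z.to_nat (Int_part (/ cf_rem theta (n - 1))).

(* qpair n = (q_{n-1}, q_n), with q_{-1} = 0, q_0 = 1,
   q_{n+1} = a_{n+1} q_n + q_{n-1} *)
Fixpoint qpair (theta : R) (n : nat) : nat * nat :=
  match n with
  | O => (0%nat, 1%nat)
  | S n' => let (p, c) := qpair theta n' in (c, (cf_a theta (S n') * c + p)%nat)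
  end.

Definition cf_q (theta : R) (n : nat) : nat := snd (qpair theta n).
Definition cf_qprev (theta : R) (n : nat) : nat := fst (qpair theta n).

(* r_{k+1} = floor(sqrt(4 a_{k+1} + 5)) - 3 if a_{k+1} <> 2, and 1 if a_{k+1} = 2.
   floor of sqrt of a natural number is Nat.sqrt; the value is >= 0 since a >= 1. *)
Definition r_succ (theta : R) (k : nat) : nat :=
  if Nat.eqb (cf_a theta (S k)) 2 then 1%nat
  else (Nat.sqrt (4 * cf_a theta (S k) + 5) - 3)%nat.

Definition rt_succ (theta : R) (k : nat) : nat :=
  if andb (Nat.eqb (cf_a theta (S k)) 4) (Nat.leb 2 (cf_a theta (S (S k)))) then 2%nat
  else r_succ theta k.

Definition in_Lambda (theta : R) (k : nat) : Prop :=
  (3 <= cf_a theta (S k))%nat \/ cf_a theta (S (S k)) = 2%nat.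

Definition Rk (theta : R) (k : nat) : R :=
  INR (rt_succ theta k) * dnint (INR (cf_q theta k) * theta)
  + dnint (INR (cf_q theta (S k)) * theta).

Definition Lk (theta : R) (k : nat) : R :=
  if Nat.eqb (cf_a theta (S (S k))) 2
  then dnint (INR (cf_q theta (S k)) * theta) + dnint (INR (cf_q theta (S (S k))) * theta)
  else dnint (INR (cf_q theta k) * theta).

(* A point of T lies in I_k(i) iff some (equivalently any suitable) real lift does; since
   dnint is 1-periodic, quantifying over all real lifts below is equivalent. *)
Definition in_I (theta : R) (k i : nat) (t : R) : Prop :=
  if Nat.even k
  then INR i * theta - Lk theta k < t < INR i * theta + Rk theta k
  else INR i * theta - Rk theta k < t < INR i * theta + Lk theta k.

Definition irrational (x : R) : Prop :=
  forall (p q : Z), q <> 0%Z -> x <> IZR p / IZR q.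

From Stdlib Require Import Reals Lra Lia ZArith.
Open Scope R_scope.

(* Write x_n = cf_rem theta n for the Gauss-map remainders and
   beta_n = x_0 x_1 ... x_(n-1) = |q_(n-1) theta - p_(n-1)|.  By the best
   approximation property, |j theta - m| >= beta_k whenever 0 < |j| < q_k,
   and ||q_(k-1) theta|| <= beta_k.  Two points of I_k(i) and I_k(i') differ
   from i theta and i' theta by less than L_k + R_k in total, so it suffices
   that L_k + R_k <= 6/7 beta_k.  This follows from the recursion
   beta_n = a_(n+1) beta_(n+1) + beta_(n+2) and the elementary bound
   7 rt_(k+1) + 8 <= 6 a_(k+1), valid when a_(k+1) >= 3, resp.
   7 rt_(k+1) + 7 <= 6 a_(k+1) + 2, used when a_(k+2) = 2. *)

Lemma dnint_le_dist (y : R) (m : Z) : dnint y <= Rabs (y - IZR m).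
Proof.
  unfold dnint, frac_part.
  destruct (base_Int_part y) as [Hlo Hhi].
  set (z := Int_part y) in *.
  destruct (Z_le_gt_dec m z) as [Hm | Hm].
  - apply IZR_le in Hm.
    apply Rle_trans with (y - IZR z); [apply Rmin_l |].
    rewrite Rabs_right; lra.
  - assert (Hm1 : IZR (z + 1) <= IZR m) by (apply IZR_le; lia).
    rewrite plus_IZR in Hm1.
    apply Rle_trans with (1 - (y - IZR z)); [apply Rmin_r |].
    rewrite Rabs_left1; lra.
Qed.

Lemma dnint_ge_of_dist (y c : R) :
  (forall m : Z, c <= Rabs (y - IZR m)) -> c <= dnint y.
Proof.
  intros Hc. unfold dnint, frac_part.
  destruct (base_Int_part y) as [Hlo Hhi].
  pose proof (Hc (Int_part y)) as Hdown.
  pose proof (Hc (Int_part y + 1)%Z) as Hup.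
  rewrite plus_IZR in Hup.
  rewrite Rabs_right in Hdown by lra. rewrite Rabs_left1 in Hup by lra.
  apply Rmin_glb; lra.
Qed.

Lemma irrational_frac_inv (x : R) :
  0 < x < 1 -> irrational x ->
  0 < frac_part (/ x) < 1 /\ irrational (frac_part (/ x)).
Proof.
  intros Hx Hirr. unfold frac_part.
  destruct (base_Int_part (/ x)) as [Hlo Hhi].
  set (z := Int_part (/ x)) in *.
  assert (Hirr' : irrational (/ x - IZR z)).
  { intros p q Hq Hpq.
    assert (Hq' : IZR q <> 0) by now apply not_0_IZR.
    assert (Hinv : / x = IZR (z * q + p) / IZR q).
    { rewrite plus_IZR, mult_IZR.
      replace (/ x) with (/ x - IZR z + IZR z) by ring.
      rewrite Hpq. field. exact Hq'. }
    assert (Hnum : (z * q + p)%Z <> 0%Z).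
    { intros H0. rewrite H0 in Hinv. unfold Rdiv in Hinv. rewrite Rmult_0_l in Hinv.
      assert (0 < / x) by (apply Rinv_0_lt_compat; lra). lra. }
    apply (Hirr q (z * q + p)%Z Hnum).
    rewrite <- (Rinv_inv x), Hinv. field.
    split; [now apply not_0_IZR | exact Hq']. }
  split; [| exact Hirr'].
  split; [| lra].
  destruct (Rle_lt_or_eq_dec 0 (/ x - IZR z)) as [Hpos | H0]; [lra | lra |].
  exfalso. apply (Hirr' 0%Z 1%Z); [lia |]. rewrite <- H0. simpl. field.
Qed.

Lemma small_comb_opposite_signs (j u v a b : Z) :
  (0 <= a)%Z -> j = (u * a + v * b)%Z -> (0 < Z.abs j < b)%Z ->
  (1 <= u /\ v <= 0 \/ u <= -1 /\ 0 <= v)%Z.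
Proof.
  intros Ha -> Hj.
  destruct (Z_lt_le_dec 0 v), (Z_lt_le_dec 0 u), (Z.eq_dec u 0), (Z.eq_dec v 0);
    nia.
Qed.

Section ContinuedFraction.

Variable theta : R.
Hypothesis theta_01 : 0 < theta < 1.
Hypothesis theta_irr : irrational theta.

Lemma cf_rem_spec (n : nat) :
  0 < cf_rem theta n < 1 /\ irrational (cf_rem theta n).
Proof.
  induction n as [| n [Hn Hirr]]; simpl.
  - split; assumption.
  - now apply irrational_frac_inv.
Qed.

Lemma cf_rem_01 (n : nat) : 0 < cf_rem theta n < 1.
Proof. exact (proj1 (cf_rem_spec n)). Qed.

Lemma Int_part_inv_cf_rem_pos (n : nat) : (0 < Int_part (/ cf_rem theta n))%Z.
Proof.
  pose proof (cf_rem_01 n).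
  destruct (base_Int_part (/ cf_rem theta n)) as [_ Hhi].
  assert (1 < / cf_rem theta n) by (rewrite <- Rinv_1; apply Rinv_lt_contravar; lra).
  apply lt_IZR. lra.
Qed.

Lemma INR_cf_a (n : nat) :
  INR (cf_a theta (S n)) = IZR (Int_part (/ cf_rem theta n)).
Proof.
  unfold cf_a. replace (S n - 1)%nat with n by lia.
  pose proof (Int_part_inv_cf_rem_pos n).
  rewrite INR_IZR_INZ, Z2Nat.id by lia. reflexivity.
Qed.

Lemma cf_a_ge1 (n : nat) : (1 <= cf_a theta (S n))%nat.
Proof.
  unfold cf_a. replace (S n - 1)%nat with n by lia.
  pose proof (Int_part_inv_cf_rem_pos n). lia.
Qed.

Lemma cf_rem_S (n : nat) :
  cf_rem theta (S n) = / cf_rem theta n - INR (cf_a theta (S n)).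
Proof. now rewrite INR_cf_a. Qed.

Fixpoint beta (n : nat) : R :=
  match n with O => 1 | S m => beta m * cf_rem theta m end.

Lemma beta_pos (n : nat) : 0 < beta n.
Proof.
  induction n as [| n IH]; simpl; [lra |].
  pose proof (cf_rem_01 n). nra.
Qed.

Lemma beta_S_lt (n : nat) : beta (S n) < beta n.
Proof. simpl. pose proof (beta_pos n). pose proof (cf_rem_01 n). nra. Qed.

Lemma beta_SS (n : nat) :
  beta n = INR (cf_a theta (S n)) * beta (S n) + beta (S (S n)).
Proof.
  change (beta (S (S n))) with (beta n * cf_rem theta n * cf_rem theta (S n)).
  change (beta (S n)) with (beta n * cf_rem theta n).
  rewrite cf_rem_S. pose proof (cf_rem_01 n). field. lra.
Qed.

Fixpoint ppair (n : nat) : nat * nat :=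
  match n with
  | O => (1%nat, 0%nat)
  | S n' => let (p, c) := ppair n' in (c, (cf_a theta (S n') * c + p)%nat)
  end.

Lemma convergent_error (n : nat) :
  INR (fst (qpair theta n)) * theta - INR (fst (ppair n)) = - (-1) ^ n * beta n /\
  INR (snd (qpair theta n)) * theta - INR (snd (ppair n)) = (-1) ^ n * beta (S n).
Proof.
  induction n as [| n IH]; [simpl; split; lra |].
  cbn [qpair ppair].
  destruct (qpair theta n) as [q' q], (ppair n) as [p' p].
  cbn [fst snd pow] in *. destruct IH as [Eprev Ecur].
  split; [rewrite Ecur; ring |].
  pose proof (beta_SS n) as Hrec.
  rewrite !plus_INR, !mult_INR.
  transitivity (INR (cf_a theta (S n)) * (INR q * theta - INR p)
                + (INR q' * theta - INR p')); [ring |].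
  rewrite Eprev, Ecur. nra.
Qed.

Definition convergent_det (n : nat) : Z :=
  (Z.of_nat (snd (ppair n)) * Z.of_nat (fst (qpair theta n))
   - Z.of_nat (fst (ppair n)) * Z.of_nat (snd (qpair theta n)))%Z.

Lemma convergent_det_sq (n : nat) : (convergent_det n * convergent_det n = 1)%Z.
Proof.
  induction n as [| n IH]; [reflexivity |].
  enough (convergent_det (S n) = - convergent_det n)%Z by lia.
  unfold convergent_det; simpl.
  destruct (qpair theta n) as [q' q], (ppair n) as [p' p]. simpl.
  rewrite !Nat2Z.inj_add, !Nat2Z.inj_mul. ring.
Qed.

Lemma best_approximation (n : nat) (j m : Z) :
  (0 < Z.abs j < Z.of_nat (cf_q theta n))%Z ->
  beta n <= Rabs (IZR j * theta - IZR m).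
Proof.
  intros Hj. unfold cf_q in Hj.
  set (q' := Z.of_nat (fst (qpair theta n))) in *.
  set (q := Z.of_nat (snd (qpair theta n))) in *.
  set (p' := Z.of_nat (fst (ppair n))).
  set (p := Z.of_nat (snd (ppair n))).
  set (e := convergent_det n).
  assert (He : e = (p * q' - p' * q)%Z) by reflexivity.
  pose proof (convergent_det_sq n) as He2. fold e in He2.
  (* (j, m) = u (q_(n-1), p_(n-1)) + v (q_n, p_n), the basis being unimodular *)
  set (u := (e * (j * p - m * q))%Z).
  set (v := (e * (m * q' - j * p'))%Z).
  assert (Ej : j = (u * q' + v * q)%Z).
  { transitivity (e * e * j)%Z; [rewrite He2; ring |].
    unfold u, v. rewrite He at 2. ring. }
  assert (Em : m = (u * p' + v * p)%Z).
  { transitivity (e * e * m)%Z; [rewrite He2; ring |].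
    unfold u, v. rewrite He at 2. ring. }
  assert (Hsigns := small_comb_opposite_signs j u v q' q ltac:(unfold q'; lia) Ej Hj).
  destruct (convergent_error n) as [Eprev Ecur].
  assert (E : IZR j * theta - IZR m
              = - (-1) ^ n * (IZR u * beta n - IZR v * beta (S n))).
  { rewrite Ej, Em, !plus_IZR, !mult_IZR.
    unfold q', q, p', p. rewrite <- !INR_IZR_INZ.
    transitivity (IZR u * (INR (fst (qpair theta n)) * theta - INR (fst (ppair n)))
                  + IZR v * (INR (snd (qpair theta n)) * theta - INR (snd (ppair n))));
      [ring |].
    rewrite Eprev, Ecur. ring. }
  (* u <> 0 and u, v have opposite signs, so the two terms cannot cancel *)
  rewrite E, Rabs_mult, Rabs_Ropp, pow_1_abs, Rmult_1_l.
  pose proof (beta_pos n). pose proof (beta_pos (S n)).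
  destruct Hsigns as [[Hu Hv] | [Hu Hv]]; apply IZR_le in Hu, Hv.
  - rewrite Rabs_right by nra. nra.
  - rewrite Rabs_left1 by nra. nra.
Qed.

Lemma dnint_q_le (n : nat) : dnint (INR (cf_q theta n) * theta) <= beta (S n).
Proof.
  eapply Rle_trans; [apply (dnint_le_dist _ (Z.of_nat (snd (ppair n)))) |].
  rewrite <- INR_IZR_INZ. unfold cf_q. rewrite (proj2 (convergent_error n)).
  rewrite Rabs_mult, pow_1_abs, Rabs_right; [lra |].
  left. apply beta_pos.
Qed.

Lemma dnint_qprev_le (n : nat) : dnint (INR (cf_qprev theta n) * theta) <= beta n.
Proof.
  eapply Rle_trans; [apply (dnint_le_dist _ (Z.of_nat (fst (ppair n)))) |].
  rewrite <- INR_IZR_INZ. unfold cf_qprev. rewrite (proj1 (convergent_error n)).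
  rewrite Rabs_mult, Rabs_Ropp, pow_1_abs, Rabs_right; [lra |].
  left. apply beta_pos.
Qed.

End ContinuedFraction.

Lemma rt_succ_bound (theta : R) (k : nat) : (1 <= cf_a theta (S k))%nat ->
  (7 * rt_succ theta k + 7 <= 6 * cf_a theta (S k) + 2)%nat /\
  ((3 <= cf_a theta (S k)) -> 7 * rt_succ theta k + 8 <= 6 * cf_a theta (S k))%nat.
Proof.
  unfold rt_succ, r_succ.
  generalize (cf_a theta (S (S k))) as a'. generalize (cf_a theta (S k)) as a.
  intros a a' Ha.
  pose proof (Nat.sqrt_spec (4 * a + 5) ltac:(lia)) as [Hsq Hsq'].
  remember (Nat.sqrt (4 * a + 5)) as s eqn:Hs.
  destruct (Nat.eqb_spec a 4), (Nat.leb 2 a'), (Nat.eqb_spec a 2); cbn [andb]; try lia.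
  all: assert (3 <= s)%nat by nia.
  all: destruct (Nat.le_gt_cases s 5) as [Hs5 | Hs5];
    [assert (s = 3 \/ s = 4 \/ s = 5)%nat as [-> | [-> | ->]] by lia | ]; nia.
Qed.

Lemma Lk_add_Rk_le (theta : R) (k : nat) :
  0 < theta < 1 -> irrational theta -> in_Lambda theta k ->
  Lk theta k + Rk theta k <= 6 / 7 * beta theta k.
Proof.
  intros H01 Hirr HL.
  pose proof (beta_SS theta H01 Hirr k) as E0.
  pose proof (beta_SS theta H01 Hirr (S k)) as E1.
  pose proof (beta_S_lt theta H01 Hirr (S k)) as L1.
  pose proof (beta_S_lt theta H01 Hirr (S (S k))) as L2.
  pose proof (beta_pos theta H01 Hirr (S (S (S k)))).
  destruct (rt_succ_bound theta k (cf_a_ge1 theta H01 Hirr k)) as [Bnd2 Bnd3].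
  set (a1 := cf_a theta (S k)) in *. set (a2 := cf_a theta (S (S k))) in *.
  set (rt := rt_succ theta k) in *.
  assert (HR : Rk theta k <= INR rt * beta theta (S k) + beta theta (S (S k))).
  { unfold Rk. fold rt.
    pose proof (dnint_q_le theta H01 Hirr k). pose proof (dnint_q_le theta H01 Hirr (S k)).
    pose proof (pos_INR rt). nra. }
  unfold Lk. fold a2.
  destruct (Nat.eqb_spec a2 2) as [Ha2 | Ha2].
  - pose proof (dnint_q_le theta H01 Hirr (S k)).
    pose proof (dnint_q_le theta H01 Hirr (S (S k))).
    rewrite Ha2 in E1. simpl (INR 2) in E1.
    apply le_INR in Bnd2. rewrite !plus_INR, !mult_INR in Bnd2. simpl in Bnd2.
    nra.
  - destruct HL as [Ha1 | Ha2']; [| contradiction].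
    pose proof (dnint_q_le theta H01 Hirr k).
    apply Bnd3, le_INR in Ha1. rewrite !plus_INR, !mult_INR in Ha1. simpl in Ha1.
    nra.
Qed.

Lemma in_I_diff (theta : R) (k i i' : nat) (t s : R) :
  in_I theta k i t -> in_I theta k i' s ->
  Rabs ((t - s) - (INR i - INR i') * theta) < Lk theta k + Rk theta k.
Proof.
  unfold in_I. destruct (Nat.even k); intros Ht Hs; apply Rabs_def1; lra.
Qed.

Theorem lemma4p5 :
  forall (theta : R), 0 < theta < 1 -> irrational theta ->
  forall (k : nat), in_Lambda theta k ->
  forall (i i' : nat),
    (1 <= i <= cf_q theta k)%nat -> (1 <= i' <= cf_q theta k)%nat -> i <> i' ->
    forall (t s : R), in_I theta k i t -> in_I theta k i' s ->
      dnint (INR (cf_qprev theta k) * theta) / 7 <= dnint (t - s).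
Proof.
  intros theta H01 Hirr k HL i i' Hi Hi' Hne t s Ht Hs.
  pose proof (dnint_qprev_le theta H01 Hirr k).
  pose proof (Lk_add_Rk_le theta k H01 Hirr HL).
  pose proof (in_I_diff theta k i i' t s Ht Hs) as Hoff.
  apply Rle_trans with (beta theta k / 7); [lra |].
  apply dnint_ge_of_dist. intros m.
  set (j := (Z.of_nat i - Z.of_nat i')%Z).
  assert (Hbest : beta theta k <= Rabs (IZR j * theta - IZR m)).
  { apply best_approximation; [exact H01 | exact Hirr | unfold j; lia]. }
  assert (Hj : IZR j * theta = (INR i - INR i') * theta)
    by (unfold j; rewrite minus_IZR, <- !INR_IZR_INZ; reflexivity).
  pose proof (Rabs_triang_inv (IZR j * theta - IZR m)
                ((INR i - INR i') * theta - (t - s))) as Htri.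
  rewrite Rabs_minus_sym with (y := t - s) in Htri.
  replace (IZR j * theta - IZR m - ((INR i - INR i') * theta - (t - s)))
    with (t - s - IZR m) in Htri by (rewrite Hj; ring).
  lra.
Qed.
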